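(* Suppose that $A,B\in\mathbb{S}^d$ and $K^\star\in\mathbb{S}^d_{\le1}$ satisfy $t_{\mathrm{mix}}(A)>4\cdot t_{\mathrm{mix}}(C(K^\star))$, where $C(K^\star):=(1-\|K^\star\|_{1\to1})A+BK^\star$. Then $\|K^\star\|_{1\to1}>1/(96\cdot t_{\mathrm{mix}}(C(K^\star)))$.
   Context: $\mathbb{S}^d$ is the set of $d\times d$ column-stochastic matrices, $\mathbb{S}^d_a:=\{aM:M\in\mathbb{S}^d\}$ and $\mathbb{S}^d_{\le1}:=\bigcup_{a\in[0,1]}\mathbb{S}^d_a$. $\|M\|_{1\to1}:=\sup_{\|x\|_1=1}\|Mx\|_1$. For $X\in\mathbb{S}^d$ with unique stationary distribution $\pi$, $D_X(t):=\sup_{p\in\Delta^d}\|X^tp-\pi\|_1$ and $t_{\mathrm{mix}}(X):=\min\{t\in\mathbb{N}:D_X(t)\le1/4\}$; if $X$ has no unique stationary distribution, $t_{\mathrm{mix}}(X):=\infty$. *)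

From HB Require Import structures.
From mathcomp Require Import all_boot all_order all_algebra.
From mathcomp Require Import all_classical all_reals.
From mathcomp Require Import ereal.
Set Implicit Arguments. Unset Strict Implicit. Unset Printing Implicit Defensive.
Import Order.TTheory GRing.Theory Num.Theory.
Local Open Scope ring_scope.
Local Open Scope classical_set_scope.

Section Defs.
Variables (R : realType) (d : nat).

Definition norm1 (x : 'cV[R]_d) : R := \sum_i `|x i 0|.

Definition col_stoch (M : 'M[R]_d) : Prop :=
  (forall i j, 0 <= M i j) /\ (forall j, \sum_i M i j = 1).

Definition sub_col_stoch (K : 'M[R]_d) : Prop :=
  exists a : R, 0 <= a <= 1 /\ exists M, col_stoch M /\ K = a *: M.

Definition opnorm11 (M : 'M[R]_d) : R :=
  sup [set norm1 (M *m x) | x in [set x : 'cV[R]_d | norm1 x = 1]].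

Definition simplex : set 'cV[R]_d :=
  [set p | (forall i, 0 <= p i 0) /\ \sum_i p i 0 = 1].

Definition unique_stationary (X : 'M[R]_d) (pi : 'cV[R]_d) : Prop :=
  simplex pi /\ X *m pi = pi /\
  forall q, simplex q -> X *m q = q -> q = pi.

Definition Dist (X : 'M[R]_d) (pi : 'cV[R]_d) (t : nat) : R :=
  sup [set norm1 (iter t (fun v => X *m v) p - pi) | p in simplex].

(* t_mix(X) in N u {+oo}: min {t | D_X(t) <= 1/4} if X has a unique
   stationary distribution (and +oo if that set is empty), +oo otherwise. *)
Definition tmix (X : 'M[R]_d) : \bar R :=
  ereal_inf [set ((t%:R : R)%:E) | t in
    [set t : nat | exists pi, unique_stationary X pi /\ Dist X pi t <= 4^-1]].

Definition Cmat (A B K : 'M[R]_d) : 'M[R]_d :=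
  (1 - opnorm11 K) *: A + B *m K.

End Defs.

From HB Require Import structures.
From mathcomp Require Import all_boot all_order all_algebra.
From mathcomp Require Import all_classical all_reals.
From mathcomp Require Import ereal.
From mathcomp Require Import ring lra.
Set Implicit Arguments.
Unset Strict Implicit.
Unset Printing Implicit Defensive.
Import Order.TTheory GRing.Theory Num.Theory.
Local Open Scope ring_scope.
Local Open Scope classical_set_scope.

(* Write t = t_mix(C) and a = ||K||.  Being within 1/4 of stationarity after
   t steps makes C^t contract zero-mass vectors by 1/4 in l1, hence C^(4t)
   contracts them by 4^-4.  As ||A y - C y|| <= 2a ||y||, the powers A^(4t) and
   C^(4t) differ by at most 8ta, which is <= 1/12 when a <= 1/(96t); so A^(4t)
   contracts zero-mass vectors by 1/8.  Then A has a unique stationary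
   distribution and D_A(4t) <= 1/4, i.e. t_mix(A) <= 4t, a contradiction. *)

Section L1Norm.
Context {R : realType} {d : nat}.
Implicit Types (p q x y : 'cV[R]_d).

Definition mass x : R := \sum_i x i 0.

Lemma norm1_ge0 x : 0 <= norm1 x.
Proof. by apply: sumr_ge0 => i _; exact: normr_ge0. Qed.

Lemma norm1_eq0 x : (norm1 x == 0) = (x == 0).
Proof.
apply/eqP/eqP => [x0|->]; last by rewrite /norm1 big1 // => i _; rewrite mxE normr0.
apply/matrixP => i j; rewrite ord1 mxE; apply/normr0_eq0.
exact: (psumr_eq0P (fun k _ => normr_ge0 (x k 0)) x0).
Qed.

Lemma norm10 : norm1 (0 : 'cV[R]_d) = 0.
Proof. by apply/eqP; rewrite norm1_eq0. Qed.

Lemma norm1D x y : norm1 (x + y) <= norm1 x + norm1 y.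
Proof. by rewrite /norm1 -big_split; apply: ler_sum => i _; rewrite mxE ler_normD. Qed.

Lemma norm1Z (c : R) x : norm1 (c *: x) = `|c| * norm1 x.
Proof. by rewrite /norm1 mulr_sumr; apply: eq_bigr => i _; rewrite mxE normrM. Qed.

Lemma norm1N x : norm1 (- x) = norm1 x.
Proof. by rewrite -scaleN1r norm1Z normrN normr1 mul1r. Qed.

Lemma norm1B_le x y : norm1 (x - y) <= norm1 x + norm1 y.
Proof. by rewrite -(norm1N y) norm1D. Qed.

Lemma massD x y : mass (x + y) = mass x + mass y.
Proof. by rewrite /mass -big_split; apply: eq_bigr => i _; rewrite mxE. Qed.

Lemma massB x y : mass (x - y) = mass x - mass y.
Proof. by rewrite /mass -sumrB; apply: eq_bigr => i _; rewrite !mxE. Qed.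

Lemma massZ (c : R) x : mass (c *: x) = c * mass x.
Proof. by rewrite /mass mulr_sumr; apply: eq_bigr => i _; rewrite mxE. Qed.

Lemma mass_norm x : mass (map_mx Num.norm x) = norm1 x.
Proof. by apply: eq_bigr => i _; rewrite mxE. Qed.

Lemma eq_of_le_mass (y z : 'cV[R]_d) :
  (forall i, y i 0 <= z i 0) -> mass y = mass z -> y = z.
Proof.
move=> yz eq_mass; apply/matrixP => i j; rewrite ord1; apply/eqP.
have diff_ge0 k : 0 <= z k 0 - y k 0 by rewrite subr_ge0.
rewrite eq_sym -subr_eq0.
apply/eqP/(@psumr_eq0P _ _ predT _ (fun k _ => diff_ge0 k)) => //.
by rewrite sumrB -/(mass z) -/(mass y) eq_mass subrr.
Qed.

Lemma norm1_simplex p : simplex p -> norm1 p = 1.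
Proof. by case=> p_ge0 <-; apply: eq_bigr => i _; rewrite ger0_norm. Qed.

Lemma mass_simplexB p q : simplex p -> simplex q -> mass (p - q) = 0.
Proof. by case=> _ p1 [_ q1]; rewrite massB /mass p1 q1 subrr. Qed.

Lemma simplex_dim_gt0 p : simplex p -> (0 < d)%N.
Proof. by case: d p => [p [_]|//]; rewrite big_ord0 => /eqP; rewrite eq_sym oner_eq0. Qed.

End L1Norm.

Section ColumnStochastic.
Context {R : realType} {d : nat}.
Implicit Types (x y : 'cV[R]_d) (X Y : 'M[R]_d).

Lemma col_stoch_norm1 X x : col_stoch X -> norm1 (X *m x) <= norm1 x.
Proof.
case=> X_ge0 X_sum; rewrite /norm1.
have -> : \sum_i `|x i 0| = \sum_i \sum_j X j i * `|x i 0|.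
  by apply: eq_bigr => i _; rewrite -mulr_suml X_sum mul1r.
rewrite exchange_big /=; apply: ler_sum => i _; rewrite mxE.
apply: le_trans (ler_norm_sum _ _ _) _; apply: ler_sum => j _.
by rewrite normrM ger0_norm.
Qed.

Lemma col_stoch_mass X x : col_stoch X -> mass (X *m x) = mass x.
Proof.
case=> _ X_sum; rewrite /mass; under eq_bigr => i _ do rewrite mxE.
by rewrite exchange_big /=; apply: eq_bigr => j _; rewrite -mulr_suml X_sum mul1r.
Qed.

Lemma col_stoch_mul X Y : col_stoch X -> col_stoch Y -> col_stoch (X *m Y).
Proof.
case=> X_ge0 X_sum [Y_ge0 Y_sum]; split.
  by move=> i j; rewrite mxE; apply: sumr_ge0 => k _; exact: mulr_ge0.
move=> j; under eq_bigr => i _ do rewrite mxE.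
rewrite exchange_big /= -(Y_sum j); apply: eq_bigr => k _.
by rewrite -mulr_suml X_sum mul1r.
Qed.

Lemma col_stoch_conv X Y (a : R) : col_stoch X -> col_stoch Y -> 0 <= a <= 1 ->
  col_stoch ((1 - a) *: X + a *: Y).
Proof.
case=> X_ge0 X_sum [Y_ge0 Y_sum] /andP[a_ge0 a_le1]; split.
  by move=> i j; rewrite !mxE; apply: addr_ge0; apply: mulr_ge0 => //; lra.
move=> j; under eq_bigr => i _ do rewrite !mxE.
by rewrite big_split /= -!mulr_sumr X_sum Y_sum !mulr1 subrK.
Qed.

Lemma norm1_conv_mulmxB X Y (a : R) y : col_stoch X -> col_stoch Y -> 0 <= a ->
  norm1 (X *m y - ((1 - a) *: X + a *: Y) *m y) <= 2 * a * norm1 y.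
Proof.
move=> sX sY a_ge0.
have -> : X *m y - ((1 - a) *: X + a *: Y) *m y = a *: (X *m y - Y *m y).
  rewrite mulmxDl -!scalemxAl; move: (X *m y) (Y *m y) => u v.
  by apply/matrixP => i j; rewrite !mxE; ring.
rewrite norm1Z ger0_norm // (mulrC 2 a) -mulrA; apply: ler_wpM2l => //.
have := norm1B_le (X *m y) (Y *m y).
by have := col_stoch_norm1 y sX; have := col_stoch_norm1 y sY; lra.
Qed.

Lemma opnorm11_scale_col_stoch X (a : R) : (0 < d)%N ->
  col_stoch X -> 0 <= a -> opnorm11 (a *: X) = a.
Proof.
move=> d_gt0 sX a_ge0; rewrite /opnorm11; set S := [set _ | _ in _].
have ub_S : ubound S a.
  move=> _ [x x1 <-]; rewrite -scalemxAl norm1Z ger0_norm //.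
  by rewrite -[leRHS]mulr1 -x1 ler_wpM2l // col_stoch_norm1.
have S_a : S a.
  pose e0 : 'cV[R]_d := delta_mx (Ordinal d_gt0) 0.
  have e0_1 : norm1 e0 = 1.
    rewrite /norm1 (bigD1 (Ordinal d_gt0)) //= big1 ?addr0.
      by rewrite mxE !eqxx normr1.
    by move=> i /negbTE i_ne; rewrite mxE i_ne normr0.
  exists e0 => //; rewrite -scalemxAl norm1Z ger0_norm // -colE.
  case: sX => X_ge0 X_sum; rewrite -[RHS]mulr1 -(X_sum (Ordinal d_gt0)).
  congr (_ * _).
  by apply: eq_bigr => i _; rewrite mxE ger0_norm.
apply/le_anti/andP; split; first by apply: ge_sup => //; exists a.
by apply: ub_le_sup => //; exists a.
Qed.

End ColumnStochastic.

Section Powers.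
Context {R : realType} {d : nat}.
Implicit Types (x y : 'cV[R]_d) (X Y : 'M[R]_d).

Definition mpow X n : 'M[R]_d := iter n (mulmx X) 1%:M.

Lemma mpowS X n : mpow X n.+1 = X *m mpow X n.
Proof. by []. Qed.

Lemma mpowD X m n : mpow X (m + n) = mpow X m *m mpow X n.
Proof. by elim: m => [|m IH]; rewrite ?mul1mx // addSn !mpowS IH mulmxA. Qed.

Lemma iter_mulmx X n x : iter n (fun v => X *m v) x = mpow X n *m x.
Proof. by elim: n => [|n IH] /=; rewrite ?mul1mx // IH mulmxA. Qed.

Lemma mpow_norm1 X n x : col_stoch X -> norm1 (mpow X n *m x) <= norm1 x.
Proof.
move=> sX; elim: n => [|n IH]; first by rewrite mul1mx.
by rewrite mpowS -mulmxA (le_trans (col_stoch_norm1 _ sX)).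
Qed.

Lemma mpow_mass X n x : col_stoch X -> mass (mpow X n *m x) = mass x.
Proof.
by move=> sX; elim: n => [|n IH]; rewrite ?mul1mx // mpowS -mulmxA col_stoch_mass.
Qed.

Lemma mpow_fixed X n x : X *m x = x -> mpow X n *m x = x.
Proof. by move=> Xx; elim: n => [|n IH]; rewrite ?mul1mx // mpowS -mulmxA IH. Qed.

Lemma norm1_mpowB X Y (e : R) n x : 0 <= e -> col_stoch X -> col_stoch Y ->
  (forall y, norm1 (X *m y - Y *m y) <= e * norm1 y) ->
  norm1 (mpow X n *m x - mpow Y n *m x) <= n%:R * e * norm1 x.
Proof.
move=> e_ge0 sX sY XY_close.
elim: n => [|n IH]; first by rewrite subrr !mul0r norm10.
set u := mpow Y n *m x.
have -> : mpow X n.+1 *m x - mpow Y n.+1 *m x =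
          X *m (mpow X n *m x - u) + (X *m u - Y *m u).
  by rewrite !mpowS -!mulmxA mulmxBr addrA subrK.
apply: le_trans (norm1D _ _) _.
have := le_trans (col_stoch_norm1 _ sX) IH.
have := le_trans (XY_close u) (ler_wpM2l e_ge0 (mpow_norm1 n x sY)).
by rewrite -natr1 !mulrDl mul1r; lra.
Qed.

End Powers.

Section Contraction.
Context {R : realType} {d : nat}.
Implicit Types (p q x y : 'cV[R]_d) (X Y : 'M[R]_d).

Definition contraction X n (c : R) :=
  forall x, mass x = 0 -> norm1 (mpow X n *m x) <= c * norm1 x.

Lemma norm1_le_Dist X pi n p : col_stoch X -> simplex pi -> simplex p ->
  norm1 (mpow X n *m p - pi) <= Dist X pi n.
Proof.
move=> sX spi sp; apply: ub_le_sup; last by exists p; rewrite ?iter_mulmx.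
exists 2 => _ [q sq <-]; rewrite iter_mulmx.
have := norm1B_le (mpow X n *m q) pi; have := mpow_norm1 n q sX.
by rewrite (norm1_simplex sq) (norm1_simplex spi); lra.
Qed.

Lemma Dist_le X pi n (r : R) : simplex pi ->
  (forall p, simplex p -> norm1 (mpow X n *m p - pi) <= r) -> Dist X pi n <= r.
Proof.
move=> spi close; apply: ge_sup; first by exists (norm1 (iter n (mulmx X) pi - pi)), pi.
by move=> _ [p sp <-]; rewrite iter_mulmx close.
Qed.

Lemma mass0_simplex_decomp x : mass x = 0 -> x != 0 ->
  exists p q, [/\ simplex p, simplex q & x = (norm1 x / 2) *: (p - q)].
Proof.
move=> x0 x_ne0; set n := norm1 x.
have n_gt0 : 0 < n by rewrite lt_def norm1_eq0 x_ne0 norm1_ge0.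
exists (n^-1 *: (map_mx Num.norm x + x)), (n^-1 *: (map_mx Num.norm x - x)); split.
- split; last by rewrite -/(mass _) massZ massD x0 addr0 mass_norm mulVf ?gt_eqF.
  move=> i; rewrite !mxE mulr_ge0 ?invr_ge0 ?(ltW n_gt0) //.
  by have := ler_norm (- x i 0); rewrite normrN; lra.
- split; last by rewrite -/(mass _) massZ massB x0 subr0 mass_norm mulVf ?gt_eqF.
  by move=> i; rewrite !mxE mulr_ge0 ?invr_ge0 ?(ltW n_gt0) // subr_ge0 ler_norm.
- apply/matrixP => i j; rewrite !mxE ord1; by field; rewrite gt_eqF.
Qed.

Lemma contraction_of_Dist_le X pi n (r : R) : col_stoch X -> simplex pi ->
  Dist X pi n <= r -> contraction X n r.
Proof.
move=> sX spi Dr x x0.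
have [->|x_ne0] := eqVneq x 0; first by rewrite mulmx0 norm10 mulr0.
have [p [q [sp sq def_x]]] := mass0_simplex_decomp x0 x_ne0.
have close p' : simplex p' -> norm1 (mpow X n *m p' - pi) <= r.
  by move=> sp'; apply: le_trans Dr; exact: norm1_le_Dist.
rewrite {1}def_x -scalemxAr norm1Z ger0_norm ?divr_ge0 ?norm1_ge0 //.
have -> : mpow X n *m (p - q) = (mpow X n *m p - pi) - (mpow X n *m q - pi).
  by rewrite mulmxBr opprB addrA subrK.
have := norm1B_le (mpow X n *m p - pi) (mpow X n *m q - pi).
have := close p sp; have := close q sq; have := norm1_ge0 x; nra.
Qed.

Lemma contraction_mpowM X n (c : R) k : col_stoch X -> 0 <= c ->
  contraction X n c -> contraction X (k * n) (c ^+ k).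
Proof.
move=> sX c_ge0 contr; elim: k => [|k IH] x x0; first by rewrite mul1mx expr0 mul1r.
rewrite mulSn mpowD -mulmxA exprS -mulrA.
apply: le_trans (contr _ _) _; first by rewrite mpow_mass.
exact: ler_wpM2l (IH x x0).
Qed.

Lemma contraction_perturb X Y n (c e : R) : 0 <= e -> col_stoch X -> col_stoch Y ->
  (forall y, norm1 (X *m y - Y *m y) <= e * norm1 y) ->
  contraction Y n c -> contraction X n (c + n%:R * e).
Proof.
move=> e_ge0 sX sY XY_close contrY x x0.
have := norm1D (mpow Y n *m x) (mpow X n *m x - mpow Y n *m x); rewrite addrC subrK.
have := contrY x x0; have := norm1_mpowB n x e_ge0 sX sY XY_close.
by rewrite mulrDl; lra.
Qed.

End Contraction.

Section Stationary.
Context {R : realType} {d : nat}.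
Implicit Types (u v : 'cV[R]_d) (X : 'M[R]_d).

Lemma col_stoch_fixed_nonzero X : (0 < d)%N -> col_stoch X ->
  exists2 v : 'cV[R]_d, v != 0 & X *m v = v.
Proof.
move=> d_gt0 [_ X_sum].
have ones_left : const_mx 1 *m (X - 1%:M) = 0 :> 'rV[R]_d.
  apply/matrixP => i j; rewrite mulmxBr mulmx1 !mxE.
  by under eq_bigr do rewrite mxE mul1r; rewrite X_sum subrr.
have /det0P[w w_ne0 w_ker] : \det (X - 1%:M)^T == 0.
  rewrite det_tr; apply/det0P; exists (const_mx 1) => //.
  by apply/eqP => /matrixP/(_ 0 (Ordinal d_gt0))/eqP; rewrite !mxE oner_eq0.
exists w^T; first by rewrite trmx_eq0.
apply/eqP; rewrite -subr_eq0 -[X in _ - X]mul1mx -mulmxBl.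
by rewrite -[X - _]trmxK -trmx_mul w_ker trmx0.
Qed.

(* The triangle inequality in [|v| = |X v| <= X |v|] is an equality, since
   both sides have the same mass. *)
Lemma col_stoch_fixed_norm X v : col_stoch X -> X *m v = v ->
  X *m map_mx Num.norm v = map_mx Num.norm v.
Proof.
move=> sX Xv; symmetry; apply: eq_of_le_mass => [i|]; last by rewrite col_stoch_mass.
rewrite !mxE -{1}Xv mxE.
apply: le_trans (ler_norm_sum _ _ _) _; apply: ler_sum => j _.
by case: sX => X_ge0 _; rewrite normrM ger0_norm // mxE.
Qed.

Lemma col_stoch_stationary X : (0 < d)%N -> col_stoch X ->
  exists2 u, simplex u & X *m u = u.
Proof.
move=> d_gt0 sX; have [v v_ne0 Xv] := col_stoch_fixed_nonzero d_gt0 sX.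
have nv_gt0 : 0 < norm1 v by rewrite lt_def norm1_eq0 v_ne0 norm1_ge0.
exists ((norm1 v)^-1 *: map_mx Num.norm v).
  split; first by move=> i; rewrite !mxE mulr_ge0 ?invr_ge0 ?(ltW nv_gt0).
  by rewrite -/(mass _) massZ mass_norm mulVf ?gt_eqF.
by rewrite -scalemxAr col_stoch_fixed_norm.
Qed.

End Stationary.

Section MixingTime.
Context {R : realType} {d : nat}.
Implicit Types (p q u : 'cV[R]_d) (X : 'M[R]_d).

Lemma stationary_eq_of_contraction X n (c : R) p q : c < 1 -> contraction X n c ->
  simplex p -> simplex q -> X *m p = p -> X *m q = q -> p = q.
Proof.
move=> c_lt1 contr sp sq Xp Xq; apply/eqP.
rewrite -subr_eq0 -norm1_eq0 eq_le norm1_ge0 andbT.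
have := contr _ (mass_simplexB sp sq); rewrite mulmxBr !mpow_fixed //.
by have := norm1_ge0 (p - q); nra.
Qed.

Lemma tmix_le_of_contraction X n (c : R) : (0 < d)%N -> col_stoch X ->
  0 <= c <= 8^-1 -> contraction X n c -> (tmix X <= (n%:R)%:E)%E.
Proof.
move=> d_gt0 sX /andP[c_ge0 c_small] contr.
have [u su Xu] := col_stoch_stationary d_gt0 sX.
apply: ereal_inf_lbound; exists n => //; exists u; split.
  do 2!split=> //; move=> q sq Xq.
  by apply: (stationary_eq_of_contraction (c := c)) contr sq su Xq Xu; lra.
apply: Dist_le => // p sp; rewrite -(mpow_fixed n Xu) -mulmxBr.
apply: le_trans (contr _ (mass_simplexB sp su)) _.
have := norm1B_le p u; rewrite (norm1_simplex sp) (norm1_simplex su) => pu_le2.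
by have := ler_wpM2l c_ge0 pu_le2; lra.
Qed.

Lemma tmix_attained X : tmix X != +oo%E ->
  exists t, tmix X = (t%:R)%:E /\
    exists pi, unique_stationary X pi /\ Dist X pi t <= 4^-1.
Proof.
rewrite /tmix; set S := [set t : nat | _] => tmix_fin.
have [[t0 St0]|noS] := pselect (exists t, S t); last first.
  move: tmix_fin; suff -> : [set ((t%:R : R)%:E) | t in S] = set0 by rewrite ereal_inf0.
  by rewrite -subset0 => x [t St _]; case: noS; exists t.
have exS : exists t, `[< S t >] by exists t0; apply/asboolP.
case: (ex_minnP exS) => t /asboolP St t_min; exists t; split => //.
apply/le_anti/andP; split; first by apply: ereal_inf_lbound; exists t.
apply: le_ereal_inf_tmp => _ [s Ss <-]; rewrite lee_fin ler_nat t_min //.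
exact/asboolP.
Qed.

End MixingTime.

Theorem lemma6 (R : realType) (d : nat) (A B K : 'M[R]_d) :
  col_stoch A -> col_stoch B -> sub_col_stoch K ->
  (4%:E * tmix (Cmat A B K) < tmix A)%E ->
  1 / (96 * fine (tmix (Cmat A B K))) < opnorm11 K.
Proof.
move=> sA sB [a [/andP[a_ge0 a_le1] [M [sM ->]]]].
set C := Cmat A B (a *: M) => tmix_lt.
have tmixC_fin : tmix C != +oo%E.
  by apply: contraTneq tmix_lt => ->; rewrite mulry gtr0_sg // mul1e ltNge leey.
have [t [tmixC [pi [[spi _] Dist_pi]]]] := tmix_attained tmixC_fin.
have d_gt0 := simplex_dim_gt0 spi.
have opK : opnorm11 (a *: M) = a := opnorm11_scale_col_stoch d_gt0 sM a_ge0.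
have defC : C = (1 - a) *: A + a *: (B *m M) by rewrite /C /Cmat opK scalemxAr.
have sC : col_stoch C.
  by rewrite defC; apply: col_stoch_conv => //; [exact: col_stoch_mul | exact/andP].
rewrite tmixC opK ltNge; apply/negP => a_small.
have contrC : contraction C (4 * t) (4^-1 ^+ 4).
  exact/contraction_mpowM/(contraction_of_Dist_le sC spi Dist_pi).
have contrA : contraction A (4 * t) (4^-1 ^+ 4 + (4 * t)%:R * (2 * a)).
  apply: contraction_perturb contrC => //; first by rewrite mulr_ge0.
  by move=> y; rewrite defC norm1_conv_mulmxB //; exact: col_stoch_mul.
have perturb_small : (4 * t)%:R * (2 * a) <= 12^-1 :> R.
  have [->|t_gt0] := posnP t; first by rewrite mul0r; lra.
  move: a_small; rewrite ler_pdivlMr ?mulr_gt0 ?ltr0n // natrM; nra.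
have tmixA_le : (tmix A <= ((4 * t)%:R)%:E)%E.
  apply: (tmix_le_of_contraction d_gt0 sA _ contrA).
  have := mulr_ge0 (ler0n R (4 * t)) (mulr_ge0 (ler0n R 2) a_ge0).
  by rewrite !exprS expr0; lra.
move: tmix_lt; rewrite tmixC -EFinM -natrM => /lt_le_trans/(_ tmixA_le).
by rewrite ltxx.
Qed.
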